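(* Let $q\ge2$, $r\ge1$, $\rho\ge2$, $s\ge1$ be integers, $N=r+\rho-1$, $n=sN$, and $\mathcal{R}_{t+1}=\{tN+1,\dots,(t+1)N\}$ for $t=0,\dots,s-1$. Let $\mathcal{C}\subseteq Q^n$ ($|Q|=q$) be a code with minimum distance $d$ such that $\mathcal{C}|_{\mathcal{R}_i}$ has minimum distance at least $\rho$ for all $i$. Let $T:=\{\mathbf{i}=(i_1,\dots,i_s)\mid i_1+\cdots+i_s\ge d,\ i_j\in\{0,\rho,\rho+1,\dots,N\}\ \forall j\}$. Let $f(\mathbf{x})=f(x_1,\dots,x_s)$ be a polynomial of the form $$f(\mathbf{x})=1+\sum_{\mathbf{j}\in\{0,\dots,N\}^s\setminus\{\underline0\}}f_{\mathbf{j}}K^{(N)}_{\mathbf{j}}(\mathbf{x})$$ with (i) $f_{\mathbf{j}}\ge0$ for all $\mathbf{j}\in\{0,\dots,N\}^s\setminus\{\underline0\}$ and (ii) $f(\mathbf{i})\le0$ for all $\mathbf{i}\in T$. Then $|\mathcal{C}|\le f(\underline0)$.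
   Context: The Krawtchouk polynomial is $K_j^{(N)}(x)=\sum_{l=0}^j(-1)^l(q-1)^{j-l}\binom xl\binom{N-x}{j-l}$, and $K^{(N)}_{\mathbf{j}}(\mathbf{x})=\prod_{p=1}^sK^{(N)}_{j_p}(x_p)$ for $\mathbf{j}=(j_1,\dots,j_s)$; $\underline0=(0,\dots,0)$. Minimum distance refers to Hamming distance; $\mathcal{C}|_{\mathcal{R}_i}$ is the projection onto coordinates in $\mathcal{R}_i$. *)

From HB Require Import structures.
From mathcomp Require Import all_boot all_order all_algebra.
From mathcomp Require Export reals.
Set Implicit Arguments. Unset Strict Implicit. Unset Printing Implicit Defensive.
Import Order.TTheory GRing.Theory Num.Theory.
Local Open Scope ring_scope.

Definition kraw (R : realType) (q N j x : nat) : R :=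
  \sum_(l < j.+1) (-1) ^+ l * ((q - 1)%:R) ^+ (j - l)
                  * ('C(x, l) * 'C(N - x, j - l))%:R.

Definition kraw_multi (R : realType) (q N s : nat) (j x : 'I_s -> nat) : R :=
  \prod_(p < s) kraw R q N (j p) (x p).

Definition LPpoly (R : realType) (q N s : nat)
    (fc : {ffun 'I_s -> 'I_N.+1} -> R) (x : 'I_s -> nat) : R :=
  1 + \sum_(j : {ffun 'I_s -> 'I_N.+1} | j != [ffun=> ord0])
        fc j * kraw_multi R q N (fun p => nat_of_ord (j p)) x.

Definition hamming (Q : finType) (m : nat) (x y : {ffun 'I_m -> Q}) : nat :=
  #|[set i | x i != y i]|.

Definition min_dist (Q : finType) (m : nat) (C : {set {ffun 'I_m -> Q}}) (d : nat) : Prop :=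
  (forall x y, x \in C -> y \in C -> x != y -> (d <= hamming x y)%N) /\
  (exists x y, [/\ x \in C, y \in C, x != y & hamming x y = d]).

(* C has minimum distance at least d (vacuous if |C| <= 1). *)
Definition min_dist_ge (Q : finType) (m : nat) (C : {set {ffun 'I_m -> Q}}) (d : nat) : Prop :=
  forall x y, x \in C -> y \in C -> x != y -> (d <= hamming x y)%N.

(* Coordinate k of the block R_{t+1} = {tN+1,...,(t+1)N} (0-based: tN + k). *)
Lemma blk_lt (s N : nat) (t : 'I_s) (k : 'I_N) : (t * N + k < s * N)%N.
Proof.
have hk := ltn_ord k; have ht := ltn_ord t.
apply: (@leq_trans (t * N + N)%N); first by rewrite ltn_add2l.
by rewrite -[(t * N + N)%N]mulSnr leq_mul2r ht orbT.
Qed.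

Definition blk (s N : nat) (t : 'I_s) (k : 'I_N) : 'I_(s * N) := Ordinal (blk_lt t k).

Definition proj_blk (Q : finType) (s N : nat) (t : 'I_s) (c : {ffun 'I_(s * N) -> Q})
  : {ffun 'I_N -> Q} := [ffun k => c (blk t k)].

Definition proj_code (Q : finType) (s N : nat) (t : 'I_s) (C : {set {ffun 'I_(s * N) -> Q}})
  : {set {ffun 'I_N -> Q}} := [set proj_blk t c | c in C].

From mathcomp Require Import all_boot all_order all_algebra.
From mathcomp Require Import reals ring.
Import Order.TTheory GRing.Theory Num.Theory.
Local Open Scope ring_scope.

(* Delsarte's linear programming argument.  Gram kernels (finite sums of
   kernels f x * f y) are closed under sums, products and nonnegative scaling,
   and have nonnegative sums over C x C.  By the Pascal-type recurrences of the
   Krawtchouk polynomials, (x, y) |-> K_j(d_H(x, y)) is a Gram kernel, hence so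
   is f(d_1(x, y), ..., d_s(x, y)) - 1, with d_t the Hamming distance on block
   t.  So the sum of f over C x C is at least |C|^2, while the diagonal terms
   equal f(0) and the off-diagonal ones are <= 0 by (ii), since the vector of
   block distances of two distinct codewords lies in T.  Thus |C|^2 <= |C| f(0). *)

Section GramKernel.
Context {R : rcfType} {W : Type}.
Implicit Types k : W -> W -> R.

Definition gram_kernel k :=
  exists fs : seq (W -> R), forall x y, k x y = \sum_(f <- fs) f x * f y.

Lemma eq_gram_kernel {k k'} : gram_kernel k -> k =2 k' -> gram_kernel k'.
Proof. by move=> [fs kE] kk'; exists fs => x y; rewrite -kk' kE. Qed.

Lemma gram_kernel0 : gram_kernel (fun _ _ => 0).
Proof. by exists [::] => x y; rewrite big_nil. Qed.

Lemma gram_kernel1 : gram_kernel (fun _ _ => 1).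
Proof. by exists [:: fun _ => 1] => x y; rewrite big_seq1 mulr1. Qed.

Lemma gram_kernelD {k1 k2} :
  gram_kernel k1 -> gram_kernel k2 -> gram_kernel (fun x y => k1 x y + k2 x y).
Proof.
by move=> [fs1 k1E] [fs2 k2E]; exists (fs1 ++ fs2) => x y; rewrite big_cat k1E k2E.
Qed.

Lemma gram_kernelM {k1 k2} :
  gram_kernel k1 -> gram_kernel k2 -> gram_kernel (fun x y => k1 x y * k2 x y).
Proof.
move=> [fs1 k1E] [fs2 k2E].
exists [seq (fun x => f x * g x) | f <- fs1, g <- fs2] => x y.
rewrite big_allpairs_dep k1E k2E big_distrl /=; apply: eq_bigr => f _.
by rewrite big_distrr /=; apply: eq_bigr => g _; ring.
Qed.

Lemma gram_kernelZ {c k} : 0 <= c -> gram_kernel k -> gram_kernel (fun x y => c * k x y).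
Proof.
move=> c_ge0 [fs kE]; exists [seq (fun x => Num.sqrt c * f x) | f <- fs] => x y.
rewrite big_map kE big_distrr /=; apply: eq_bigr => f _.
by rewrite -[in LHS](sqr_sqrtr c_ge0) expr2; ring.
Qed.

Lemma gram_kernel_sum (I : Type) (r : seq I) (P : pred I) (k : I -> W -> W -> R) :
  (forall i, P i -> gram_kernel (k i)) ->
  gram_kernel (fun x y => \sum_(i <- r | P i) k i x y).
Proof.
move=> gk; elim: r => [|i r IH].
  by apply: (eq_gram_kernel gram_kernel0) => x y; rewrite big_nil.
have [Pi|nPi] := boolP (P i).
  by apply: (eq_gram_kernel (gram_kernelD (gk i Pi) IH)) => x y; rewrite big_cons Pi.
by apply: (eq_gram_kernel IH) => x y; rewrite big_cons (negbTE nPi).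
Qed.

Lemma gram_kernel_prod (I : Type) (r : seq I) (k : I -> W -> W -> R) :
  (forall i, gram_kernel (k i)) -> gram_kernel (fun x y => \prod_(i <- r) k i x y).
Proof.
move=> gk; elim: r => [|i r IH].
  by apply: (eq_gram_kernel gram_kernel1) => x y; rewrite big_nil.
by apply: (eq_gram_kernel (gram_kernelM (gk i) IH)) => x y; rewrite big_cons.
Qed.

End GramKernel.

Lemma gram_kernel_comp {R : rcfType} {V W : Type} (g : V -> W) {k : W -> W -> R} :
  gram_kernel k -> gram_kernel (fun x y => k (g x) (g y)).
Proof. by move=> [fs kE]; exists [seq f \o g | f <- fs] => x y; rewrite big_map kE. Qed.

Lemma gram_kernel_form_ge0 (R : rcfType) (T : finType) (A : {pred T}) (k : T -> T -> R) :
  gram_kernel k -> 0 <= \sum_(x in A) \sum_(y in A) k x y.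
Proof.
move=> [fs kE].
have -> : \sum_(x in A) \sum_(y in A) k x y = \sum_(f <- fs) (\sum_(x in A) f x) ^+ 2.
  under eq_bigr => x _ do under eq_bigr => y _ do rewrite kE.
  under eq_bigr => x _ do rewrite exchange_big /=.
  rewrite exchange_big /=; apply: eq_bigr => f _.
  by rewrite expr2 big_distrl /=; apply: eq_bigr => x _; rewrite big_distrr.
by apply: sumr_ge0 => f _; apply: sqr_ge0.
Qed.

Lemma delsarte_bound (R : rcfType) (T : finType) (C : {set T}) (K : T -> T -> R) (b : R) :
  gram_kernel K -> (0 < #|C|)%N ->
  {in C, forall x, 1 + K x x <= b} ->
  {in C &, forall x y, x != y -> 1 + K x y <= 0} ->
  #|C|%:R <= b.
Proof.
move=> gK C_gt0 diag offdiag.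
have lower : #|C|%:R * #|C|%:R <= \sum_(x in C) \sum_(y in C) (1 + K x y) :> R.
  rewrite (eq_bigr (fun x => #|C|%:R + \sum_(y in C) K x y)); last first.
    by move=> x _; rewrite big_split /= sumr_const.
  rewrite big_split /= sumr_const -[#|C|%:R *+ _]mulr_natr lerDl.
  exact: gram_kernel_form_ge0.
have upper : \sum_(x in C) \sum_(y in C) (1 + K x y) <= \sum_(x in C) b.
  apply: ler_sum => x Cx; rewrite (bigD1 x) //= -[leRHS]addr0.
  apply: lerD; first exact: diag.
  by apply: sumr_le0 => y /andP[Cy yx]; apply: offdiag; rewrite // eq_sym.
have := le_trans lower upper; rewrite sumr_const -[b *+ _]mulr_natr.
by rewrite ler_pM2r // ltr0n.
Qed.

Section Krawtchouk.
Variables (R : realType) (q : nat).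

Lemma kraw_deg0 N x : kraw R q N 0 x = 1.
Proof. by rewrite /kraw big_ord1 !expr0 !bin0 !mul1r. Qed.

Lemma kraw_len0 j : kraw R q 0 j.+1 0 = 0.
Proof.
rewrite /kraw big1 // => l _.
by case: (nat_of_ord l) => [|l']; rewrite ?sub0n bin0n ?muln0 ?mul0n mulr0.
Qed.

Lemma kraw_succ_agree N j x : (x <= N)%N ->
  kraw R q N.+1 j.+1 x = kraw R q N j.+1 x + (q - 1)%:R * kraw R q N j x.
Proof.
move=> le_xN; rewrite /kraw (subSn le_xN) big_ord_recr [X in _ = X + _]big_ord_recr /=.
rewrite subnn !bin0 -addrA [X in _ = _ + X]addrC addrA; congr (_ + _).
rewrite mulr_sumr -big_split /=; apply: eq_bigr => l _.
have le_lj : (l <= j)%N by rewrite -ltnS.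
by rewrite (subSn le_lj) binS !natrM natrD exprS; ring.
Qed.

Lemma kraw_succ_disagree N j x :
  kraw R q N.+1 j.+1 x.+1 = kraw R q N j.+1 x - kraw R q N j x.
Proof.
rewrite /kraw subSS big_ord_recl [X in _ = X - _]big_ord_recl /=.
rewrite !bin0 -addrA; congr (_ + _).
rewrite -sumrN -big_split /=; apply: eq_bigr => l _.
by rewrite /bump /= !add1n !subSS binS natrM natrD !natrM exprS; ring.
Qed.

End Krawtchouk.

Lemma sum_delta (R : pzSemiRingType) (Q : finType) (a : Q) (F : Q -> R) :
  \sum_c (a == c)%:R * F c = F a.
Proof.
rewrite (bigD1 a) //= eqxx mul1r big1 ?addr0 // => c /negbTE.
by rewrite eq_sym => ->; rewrite mul0r.
Qed.

Lemma gram_kernel_eq_indicator (R : rcfType) (Q : finType) :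
  gram_kernel (fun a b : Q => #|Q|%:R * (a == b)%:R - 1 : R).
Proof.
set q : R := #|Q|%:R.
exists [seq (fun a => Num.sqrt q * ((a == c)%:R - q^-1)) | c <- index_enum Q] => a b.
have q_neq0 : q != 0 by rewrite pnatr_eq0 -lt0n; apply/card_gt0P; exists a.
have sqrt_q2 : Num.sqrt q * Num.sqrt q = q by rewrite -expr2 sqr_sqrtr // ler0n.
rewrite big_map (eq_bigr (fun c => q * ((a == c)%:R * (b == c)%:R) - (a == c)%:R * 1
    - (b == c)%:R * 1 + q^-1)); last by move=> c _; rewrite mulrACA sqrt_q2; field.
rewrite big_split /= !sumrB -mulr_sumr !sum_delta sumr_const eq_sym.
by rewrite -[_ *+ #|_|]mulr_natr mulVf //; ring.
Qed.

Section Disagreement.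
Context {Q : finType} {W : Type}.
Variable R : realType.

Definition disagree (ps : seq (W -> Q)) x y := count (fun pi => pi x != pi y) ps.

Lemma gram_kernel_kraw_disagree ps j :
  gram_kernel (fun x y => kraw R #|Q| (size ps) j (disagree ps x y)).
Proof.
elim: ps j => [|pi ps IH] [|j].
- by apply: (eq_gram_kernel gram_kernel1) => x y; rewrite kraw_deg0.
- by apply: (eq_gram_kernel gram_kernel0) => x y; rewrite kraw_len0.
- by apply: (eq_gram_kernel gram_kernel1) => x y; rewrite kraw_deg0.
(* On one more coordinate pi, K_(j+1) is K_(j+1) + (q [pi x = pi y] - 1) K_j
   on the old ones: the agree/disagree recurrences give q - 1 and -1. *)
have gram_pi := gram_kernel_comp pi (gram_kernel_eq_indicator R Q).
apply: (eq_gram_kernel (gram_kernelD (IH j.+1) (gram_kernelM gram_pi (IH j)))) => x y.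
have Q_gt0 : (0 < #|Q|)%N by apply/card_gt0P; exists (pi x).
rewrite /disagree /=; case: (eqVneq (pi x) (pi y)) => _ /=.
  by rewrite add0n kraw_succ_agree ?count_size // mulr1 natrB.
by rewrite add1n kraw_succ_disagree mulr0 sub0r mulN1r.
Qed.

End Disagreement.

Section Hamming.
Context {Q : finType} {m : nat}.
Implicit Types x y : {ffun 'I_m -> Q}.

Lemma hammingE x y : hamming x y = (\sum_i (x i != y i))%N.
Proof.
rewrite /hamming -sum1_card big_mkcond; apply: eq_bigr => i _.
by rewrite inE; case: (_ != _).
Qed.

Lemma hammingxx x : hamming x x = 0%N.
Proof. by rewrite hammingE big1 // => i _; rewrite eqxx. Qed.

Lemma hamming_le x y : (hamming x y <= m)%N.
Proof. by rewrite /hamming (leq_trans (max_card _)) ?card_ord. Qed.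

Lemma hamming_disagree x y :
  hamming x y = disagree [seq (fun w : {ffun 'I_m -> Q} => w i) | i <- enum 'I_m] x y.
Proof.
by rewrite /disagree count_map -sum1_count /hamming cardsE -sum1_card big_enum_cond.
Qed.

Lemma gram_kernel_kraw_hamming (R : realType) j :
  gram_kernel (fun x y : {ffun 'I_m -> Q} => kraw R #|Q| m j (hamming x y)).
Proof.
have := gram_kernel_kraw_disagree R
  [seq (fun w : {ffun 'I_m -> Q} => w i) | i <- enum 'I_m] j.
rewrite size_map size_enum_ord => /eq_gram_kernel; apply=> x y.
by rewrite hamming_disagree.
Qed.

Lemma min_dist_ge_hamming {C : {set {ffun 'I_m -> Q}}} {rho x y} :
  min_dist_ge C rho -> x \in C -> y \in C ->
  (hamming x y == 0%N) || (rho <= hamming x y)%N.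
Proof.
move=> C_rho Cx Cy; have [->|xy] := eqVneq x y; first by rewrite hammingxx.
by rewrite C_rho ?orbT.
Qed.

End Hamming.

Section Blocks.
Variables (s N : nat).

Lemma blk_inj : injective (fun p : 'I_s * 'I_N => blk p.1 p.2).
Proof.
move=> [t k] [t' k'] /(congr1 val) /= tk_eq.
have N_gt0 : (0 < N)%N by apply: leq_ltn_trans (ltn_ord k).
have := congr1 (divn^~ N) tk_eq; rewrite !divnMDl // !divn_small // !addn0 => tt'.
have := congr1 (modn^~ N) tk_eq; rewrite !modnMDl !modn_small // => kk'.
by congr pair; apply: val_inj.
Qed.

Lemma big_blk (V : Type) (idx : V) (op : Monoid.com_law idx) (F : 'I_(s * N) -> V) :
  \big[op/idx]_i F i = \big[op/idx]_(t < s) \big[op/idx]_(k < N) F (blk t k).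
Proof.
rewrite pair_bigA /= (reindex (fun p : 'I_s * 'I_N => blk p.1 p.2)) //=.
by apply/onW_bij/(inj_card_bij blk_inj); rewrite card_prod !card_ord.
Qed.

Lemma hamming_blocks (Q : finType) (x y : {ffun 'I_(s * N) -> Q}) :
  hamming x y = (\sum_(t < s) hamming (proj_blk t x) (proj_blk t y))%N.
Proof.
rewrite hammingE big_blk; apply: eq_bigr => t _.
by rewrite hammingE; apply: eq_bigr => k _; rewrite !ffunE.
Qed.

End Blocks.

Section LPpoly.
Context {R : realType} {q N s : nat} {fc : {ffun 'I_s -> 'I_N.+1} -> R}.

Lemma eq_LPpoly {x x' : 'I_s -> nat} :
  x =1 x' -> @LPpoly R q N s fc x = @LPpoly R q N s fc x'.
Proof.
move=> xx'; rewrite /LPpoly /kraw_multi; congr (1 + _); apply: eq_bigr => j _.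
by congr (_ * _); apply: eq_bigr => p _; rewrite xx'.
Qed.

Lemma gram_kernel_LPpoly (W : Type) (dist : 'I_s -> W -> W -> nat) :
  (forall j, j != [ffun=> ord0] -> 0 <= fc j) ->
  (forall p i, gram_kernel (fun x y => kraw R q N i (dist p x y))) ->
  gram_kernel (fun x y => @LPpoly R q N s fc (fun p => dist p x y) - 1).
Proof.
move=> fc_ge0 gram_dist.
have : gram_kernel (fun x y => \sum_(j | j != [ffun=> ord0])
    fc j * kraw_multi R q N (fun p => nat_of_ord (j p)) (fun p => dist p x y)).
  apply: gram_kernel_sum => j /fc_ge0 fc_j_ge0.
  exact/(gram_kernelZ fc_j_ge0)/gram_kernel_prod.
by move/eq_gram_kernel; apply=> x y; rewrite /LPpoly [1 + _]addrC addrK.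
Qed.

End LPpoly.

Theorem corollary3 (R : realType) (q r rho s N d : nat) (Q : finType)
    (hq : (2 <= q)%N) (hr : (1 <= r)%N) (hrho : (2 <= rho)%N) (hs : (1 <= s)%N)
    (hN : N = (r + rho - 1)%N) (hQ : #|Q| = q)
    (C : {set {ffun 'I_(s * N) -> Q}})
    (hd : min_dist C d)
    (hproj : forall t : 'I_s, min_dist_ge (proj_code t C) rho)
    (fc : {ffun 'I_s -> 'I_N.+1} -> R)
    (hf_nonneg : forall j : {ffun 'I_s -> 'I_N.+1}, j != [ffun=> ord0] -> 0 <= fc j)
    (hf_T : forall i : {ffun 'I_s -> 'I_N.+1},
        (d <= \sum_(p < s) i p)%N ->
        (forall p, (i p == 0 :> nat) || (rho <= i p)%N) ->
        @LPpoly R q N s fc (fun p => nat_of_ord (i p)) <= 0) :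
  (#|C|)%:R <= @LPpoly R q N s fc (fun _ => 0%N).
Proof.
have [C_d [x0 [_ [Cx0 _ _ _]]]] := hd.
pose dist t (x y : {ffun 'I_(s * N) -> Q}) := hamming (proj_blk t x) (proj_blk t y).
apply: (@delsarte_bound _ _ C (fun x y => @LPpoly R q N s fc (fun t => dist t x y) - 1)).
- apply: gram_kernel_LPpoly => // t j; rewrite -hQ.
  exact: gram_kernel_comp (gram_kernel_kraw_hamming R j).
- by apply/card_gt0P; exists x0.
- by move=> x _; rewrite addrC subrK (eq_LPpoly (fun t => hammingxx _)).
move=> x y Cx Cy xy; rewrite addrC subrK.
pose i := [ffun t => inord (dist t x y) : 'I_N.+1].
have iE t : i t = dist t x y :> nat by rewrite ffunE inordK // ltnS hamming_le.
rewrite -(eq_LPpoly iE); apply: hf_T => [|t].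
  by rewrite (eq_bigr _ (fun t _ => iE t)) -hamming_blocks C_d.
by rewrite iE; apply: min_dist_ge_hamming (hproj t) _ _; apply: imset_f.
Qed.
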